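(* Let $A$ be a nontrivial closed class of decision tables from $\mathcal M_2^\infty$ and $\psi$ a bounded complexity measure. If the function $Z_{\psi,A}$ is not everywhere defined, then the function $\mathcal H^\infty_{\psi,A}$ is not everywhere defined.
   Context: Notation: $\omega=\{0,1,2,\dots\}$; $\mathcal P(\omega)$ is the set of nonempty finite subsets of $\omega$; $E_2=\{0,1\}$. $P=\{f_i:i\in\omega\}$ is a set of attributes, $f_i\neq f_j$ for $i\ne j$. Decision tables: $\mathcal M_2^\infty$ is the set of rectangular tables filled with numbers from $E_2$, whose columns are labeled with pairwise different attributes from $P$, whose rows are pairwise different, and each row of which is labeled with a set from $\mathcal P(\omega)$ (its set of decisions). The empty table (no rows) is denoted $\Lambda$ and belongs to $\mathcal M_2^\infty$. For $T\in\mathcal M_2^\infty$: $\Pi(T)$ is the intersection of the decision sets of all rows (common decisions); $\mathrm{At}(T)$ is the set of attributes labeling columns; $N(T)$ is the number of rows. For nonempty $T$ and a word $\alpha=(f_{i_1},\delta_1)\cdots(f_{i_m},\delta_m)$ with $f_{i_j}\in\mathrm{At}(T)$, $\delta_j\in E_2$, $T\alpha$ is the subtable of $T$ consisting of the rows having value $\delta_j$ in the column $f_{i_j}$ for all $j$; $T\lambda=T$ for the empty word $\lambda$. Operations: for $D\subseteq\mathrm{At}(T)$, $I(D,T)$ is obtained from $T$ by deleting the columns labeled with attributes from $D$ and, in each group of rows coinciding on the remaining columns, keeping only the first row; $I(\mathrm{At}(T),T)=\Lambda$. For $\nu:E_2^{|\mathrm{At}(T)|}\to\mathcal P(\omega)$,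 $J(\nu,T)$ is obtained by replacing the decision set of each row $\bar\delta$ by $\nu(\bar\delta)$. $[T]=\{J(\nu,I(D,T)):D\subseteq\mathrm{At}(T),\ \nu:E_2^{|\mathrm{At}(T)\setminus D|}\to\mathcal P(\omega)\}$; for nonempty $A\subseteq\mathcal M_2^\infty$, $[A]=\bigcup_{T\in A}[T]$. $A$ is a closed class if $[A]=A$; nontrivial if it contains a nonempty table. Decision trees: a $2$-decision tree is a finite directed rooted tree with at least two nodes in which the root and the edges leaving the root are unlabeled, each terminal node is labeled with a decision from $\omega$, and each other node is labeled with an attribute from $P$, each edge leaving such a node being labeled with a number from $E_2$. $\mathrm{At}(\Gamma)$ is the set of attributes labeling nodes of $\Gamma$. For a complete path $\tau=v_1,d_1,\dots,v_m,d_m,v_{m+1}$ (from the root to a terminal node), $\pi(\tau)=\lambda$ if $m=1$, and otherwise $\pi(\tau)=(f_{i_2},\delta_2)\cdots(f_{i_m},\delta_m)$ where $v_j$ is labeled $f_{i_j}$ and $d_j$ is labeled $\delta_j$; $T(\tau)=T\pi(\tau)$. For $T\ne\Lambda$, a nondeterministic decision tree for $T$ is a $2$-decision tree $\Gamma$ with $\mathrm{At}(\Gamma)\subseteq\mathrm{At}(T)$ such that every row of $T$ belongs to $T(\tau)$ for some complete path $\tau$, and for every complete path $\tau$ either $T(\tau)=\Lambda$ or the decision at the terminal node of $\tau$ belongs to $\Pi(T(\tau))$. A deterministic decision tree for $T$ is a nondeterministic decision tree for $T$ in which, additionally, exactly one edge leaves the root and the edges leaving any node that is neither the root nor terminal are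 labeled with pairwise different numbers. Complexity measures: a partially bounded complexity measure is a function $\psi:P^*\to\omega$ on finite words over $P$ such that for all words $\alpha_1,\alpha_2$: $\psi(\alpha_1)=0$ iff $\alpha_1=\lambda$; $\psi(\alpha_1)$ is invariant under permutation of letters; $\psi(\alpha_1)\le\psi(\alpha_1\alpha_2)$; $\psi(\alpha_1\alpha_2)\le\psi(\alpha_1)+\psi(\alpha_2)$. It is bounded if in addition $\psi(\alpha)\ge|\alpha|$ for all $\alpha$. $\psi$ is extended to words $(f_{i_1},\delta_1)\cdots(f_{i_m},\delta_m)$ by $\psi(f_{i_1}\cdots f_{i_m})$ ($\psi(\lambda)=0$). For a $2$-decision tree $\Gamma$, $\psi(\Gamma)=\max_\tau\psi(\pi(\tau))$ over complete paths. For $T\ne\Lambda$, $\psi^d(T)$ (resp. $\psi^a(T)$) is the minimum of $\psi(\Gamma)$ over deterministic (resp. nondeterministic) decision trees $\Gamma$ for $T$; $\psi^d(\Lambda)=\psi^a(\Lambda)=0$. Parameters: $m_\psi(T)=\max\{\psi(f_i):f_i\in\mathrm{At}(T)\}$, $m_\psi(\Lambda)=0$. A table $Q\in\mathcal M_2^\infty$ is complete if $N(Q)=2^{|\mathrm{At}(Q)|}$; $Z(T)$ is the maximum number of columns of a complete table in $[T]$ if such tables exist, and $0$ otherwise; $Z(\Lambda)=0$. For $n\in\omega$: $A_\psi(n)=\{T\in A:m_\psi(T)\le n\}$; $Z_{\psi,A}(n)$ is undefined if $\{Z(T):T\in A_\psi(n)\}$ is infinite, else its maximum; $\mathcal H^\infty_{\psi,A}(n)$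 is undefined if $\{\psi^d(T):T\in A,\psi^a(T)\le n\}$ is infinite, else its maximum. *)

From mathcomp Require Import all_boot.
From mathcomp Require Import finmap.
Set Implicit Arguments. Unset Strict Implicit. Unset Printing Implicit Defensive.
Local Open Scope fset_scope.

(* Attribute f_i is represented by its index i : nat; E_2 = bool;
   a decision set (element of P(omega)) is a nonempty {fset nat}. *)

Record table := Table {
  cols : seq nat;
  rows : seq (seq bool * {fset nat})
}.

Definition Lambda : table := Table [::] [::].

(* membership in M_2^infty *)
Definition wf_table (T : table) : Prop :=
  T = Lambda \/
  [/\ cols T != [::], uniq (cols T), rows T != [::] &
      [/\ all (fun r => size r.1 == size (cols T)) (rows T),
           uniq (map fst (rows T)) &
           all (fun r => r.2 != fset0) (rows T)]].

Definition N_rows (T : table) : nat := size (rows T).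

Definition row_val (T : table) (r : seq bool) (f : nat) : bool :=
  nth false r (index f (cols T)).

Definition row_sat (T : table) (alpha : seq (nat * bool)) (r : seq bool) : bool :=
  all (fun p => row_val T r p.1 == p.2) alpha.

Definition subtable (T : table) (alpha : seq (nat * bool)) : table :=
  let rs := [seq r <- rows T | row_sat T alpha r.1] in
  if rs is [::] then Lambda else Table (cols T) rs.

Definition dedup_first (s : seq (seq bool * {fset nat})) :=
  foldl (fun acc x => if x.1 \in map fst acc then acc else rcons acc x) [::] s.

Definition I_op (D : seq nat) (T : table) : table :=
  let keep := [seq f <- cols T | f \notin D] in
  if keep is [::] then Lambda else
  Table keep (dedup_first [seq ([seq row_val T r.1 f | f <- keep], r.2) | r <- rows T]).

Definition J_op (nu : seq bool -> {fset nat}) (T : table) : table :=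
  Table (cols T) [seq (r.1, nu r.1) | r <- rows T].

Definition in_cl (T' T : table) : Prop :=
  exists (D : seq nat) (nu : seq bool -> {fset nat}),
    {subset D <= cols T} /\ (forall x, nu x != fset0) /\ T' = J_op nu (I_op D T).

Definition closed_class (A : table -> Prop) : Prop :=
  (forall T, A T -> wf_table T) /\ (exists T, A T) /\
  (forall T, A T <-> exists T0, A T0 /\ in_cl T T0).

Definition nontrivial (A : table -> Prop) : Prop :=
  exists T, A T /\ T <> Lambda.

(* non-root nodes: terminal (decision) or attribute-labelled with labelled edges *)
Inductive dnode :=
  | Leaf : nat -> dnode
  | Node : nat -> dforest -> dnode
with dforest :=
  | FNil : dforest
  | FCons : bool -> dnode -> dforest -> dforest.

(* a 2-decision tree: the (unlabelled) root with the list of its children *)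
Definition dtree := seq dnode.

Fixpoint forest_labels (f : dforest) : seq bool :=
  match f with
  | FNil => [::]
  | FCons b _ f' => b :: forest_labels f'
  end.

Fixpoint node_ok (det : bool) (v : dnode) : bool :=
  match v with
  | Leaf _ => true
  | Node _ f => (if f is FNil then false else true) && forest_ok det f
                && (det ==> uniq (forest_labels f))
  end
with forest_ok (det : bool) (f : dforest) : bool :=
  match f with
  | FNil => true
  | FCons _ v f' => node_ok det v && forest_ok det f'
  end.

Fixpoint node_attrs (v : dnode) : seq nat :=
  match v with
  | Leaf _ => [::]
  | Node a f => a :: forest_attrs f
  end
with forest_attrs (f : dforest) : seq nat :=
  match f with
  | FNil => [::]
  | FCons _ v f' => node_attrs v ++ forest_attrs f'
  end.

Fixpoint node_paths (v : dnode) : seq (seq (nat * bool) * nat) :=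
  match v with
  | Leaf d => [:: ([::], d)]
  | Node a f => forest_paths a f
  end
with forest_paths (a : nat) (f : dforest) : seq (seq (nat * bool) * nat) :=
  match f with
  | FNil => [::]
  | FCons b v f' =>
      [seq ((a, b) :: p.1, p.2) | p <- node_paths v] ++ forest_paths a f'
  end.

Definition tree_paths (G : dtree) := flatten (map node_paths G).
Definition tree_attrs (G : dtree) := flatten (map node_attrs G).

Definition nondet_tree (T : table) (G : dtree) : Prop :=
  [/\ G <> [::], all (node_ok false) G,
      {subset tree_attrs G <= cols T},
      (forall r, r \in rows T ->
         exists2 p, p \in tree_paths G & r \in rows (subtable T p.1)) &
      (forall p, p \in tree_paths G ->
         subtable T p.1 = Lambda \/
         forall r, r \in rows (subtable T p.1) -> p.2 \in r.2)].

Definition det_tree (T : table) (G : dtree) : Prop :=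
  nondet_tree T G /\ size G = 1 /\ all (node_ok true) G.

Definition partially_bounded_measure (psi : seq nat -> nat) : Prop :=
  [/\ forall a, (psi a == 0) = (a == [::]),
      forall a b, perm_eq a b -> psi a = psi b,
      forall a b, psi a <= psi (a ++ b) &
      forall a b, psi (a ++ b) <= psi a + psi b].

Definition bounded_measure (psi : seq nat -> nat) : Prop :=
  partially_bounded_measure psi /\ forall a, size a <= psi a.

Definition tree_cost (psi : seq nat -> nat) (G : dtree) : nat :=
  \max_(p <- tree_paths G) psi (map fst p.1).

Definition psi_d_val (psi : seq nat -> nat) (T : table) (k : nat) : Prop :=
  if rows T is [::] then k = 0 else
  (exists G, det_tree T G /\ tree_cost psi G = k) /\
  (forall G, det_tree T G -> k <= tree_cost psi G).

Definition psi_a_val (psi : seq nat -> nat) (T : table) (k : nat) : Prop :=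
  if rows T is [::] then k = 0 else
  (exists G, nondet_tree T G /\ tree_cost psi G = k) /\
  (forall G, nondet_tree T G -> k <= tree_cost psi G).

Definition m_psi (psi : seq nat -> nat) (T : table) : nat :=
  \max_(f <- cols T) psi [:: f].

Definition complete (Q : table) : Prop := N_rows Q = 2 ^ size (cols Q).

Definition Z_val (T : table) (k : nat) : Prop :=
  (exists Q, [/\ in_cl Q T, complete Q, size (cols Q) = k &
     forall Q', in_cl Q' T -> complete Q' -> size (cols Q') <= k])
  \/ (k = 0 /\ forall Q, in_cl Q T -> ~ complete Q).

Definition infinite_set (S : nat -> Prop) : Prop :=
  ~ exists s : seq nat, forall k, S k -> k \in s.

Definition Z_undefined (psi : seq nat -> nat) (A : table -> Prop) (n : nat) :=
  infinite_set (fun k => exists T, [/\ A T, m_psi psi T <= n & Z_val T k]).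

Definition H_undefined (psi : seq nat -> nat) (A : table -> Prop) (n : nat) :=
  infinite_set (fun k => exists T, [/\ A T,
     (exists a, psi_a_val psi T a /\ a <= n) & psi_d_val psi T k]).

From mathcomp Require Import all_boot finmap zify.
From Stdlib Require Import Classical.
Set Implicit Arguments. Unset Strict Implicit. Unset Printing Implicit Defensive.

(* Relabel a complete table with k columns so that a row x receives the decisions t.+1 for
   every change x_t != x_(t+1), and 0 when x_0 = x_(k-1); every row has at least one.  A
   nondeterministic tree certifies a decision with two queries, so psi^a <= 2n when every
   attribute costs at most n.  A deterministic tree, however, must find the change point of the
   threshold rows 0..01..1: an adversary answering each query so as to keep the larger half of
   the undecided interval forces depth at least log2 (k - 1), and psi dominates depth.  So
   unbounded Z at n gives unbounded psi^d among tables with psi^a <= 2n. *)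

Definition witness (x : seq bool) (i : nat) : bool :=
  if i is t.+1 then (t.+1 < size x) && (nth false x t != nth false x t.+1)
  else nth false x 0 == nth false x (size x).-1.

Definition witness_seq (x : seq bool) : seq nat :=
  [seq i <- iota 0 (size x).+1 | witness x i].

Definition witnesses (x : seq bool) : {fset nat} := seq_fset tt (witness_seq x).

Definition first_witness (x : seq bool) : nat := nth 0 (witness_seq x) 0.

Lemma in_witnesses x i : (i \in witnesses x) = witness x i.
Proof.
rewrite seq_fsetE mem_filter mem_iota /=; case: i => [|t] /=; first by rewrite andbT.
by apply/andP/idP => [[]//|H]; split=> //; case/andP: H => H _; lia.
Qed.

Lemma exists_adjacent_change x m : m < size x -> nth false x 0 != nth false x m ->
  exists2 t, t < m & nth false x t != nth false x t.+1.
Proof.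
elim: m => [|m IH] Hm; first by rewrite eqxx.
case: (eqVneq (nth false x 0) (nth false x m)) => [E|N] H; first by exists m; rewrite -?E.
by case: (IH (ltnW Hm) N) => t Ht Ht2; exists t => //; lia.
Qed.

Lemma witness_exists x : exists i, witness x i.
Proof.
case: (boolP (witness x 0)) => [H|]; first by exists 0.
case: x => [|b x] //= H.
have [t Ht Hch] := @exists_adjacent_change (b :: x) (size x) (ltnSn _) H.
by exists t.+1 => /=; rewrite Hch andbT; lia.
Qed.

Lemma first_witnessP x : first_witness x \in witnesses x.
Proof.
have [i Hi] := witness_exists x.
have : i \in witness_seq x by rewrite -(seq_fsetE tt) in_witnesses.
by rewrite seq_fsetE /first_witness; case: (witness_seq x) => // j s _; apply: mem_head.
Qed.

Lemma witnesses_neq0 x : witnesses x != fset0.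
Proof. by apply/fset0Pn; exists (first_witness x); apply: first_witnessP. Qed.

Definition step_vec (k t : nat) : seq bool := mkseq (fun i => t < i) k.

Lemma witness_step_vec k t i : t.+1 < k -> witness (step_vec k t) i -> i = t.+1.
Proof.
move=> Ht; rewrite /witness size_mkseq; case: i => [|i].
  by rewrite !nth_mkseq //; lia.
by case/andP => Hi; rewrite !nth_mkseq //; lia.
Qed.

Fixpoint bool_seqs (k : nat) : seq (seq bool) :=
  if k is k'.+1 then map (cons false) (bool_seqs k') ++ map (cons true) (bool_seqs k')
  else [:: [::]].

Lemma size_bool_seqs k : size (bool_seqs k) = 2 ^ k.
Proof. by elim: k => //= k IH; rewrite size_cat !size_map IH expnS mul2n addnn. Qed.

Lemma mem_bool_seqs k x : size x = k -> x \in bool_seqs k.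
Proof.
elim: k x => [|k IH] [|b x] //= [Hx]; rewrite mem_cat.
by case: b; apply/orP; [right|left]; apply: map_f; apply: IH.
Qed.

Lemma complete_row_keys Q x : uniq (map fst (rows Q)) ->
  all (fun r => size r.1 == size (cols Q)) (rows Q) -> complete Q ->
  size x = size (cols Q) -> x \in map fst (rows Q).
Proof.
move=> Uq /allP Sz NQ Sx.
have sub : {subset map fst (rows Q) <= bool_seqs (size (cols Q))}.
  by move=> y /mapP [z /Sz /eqP Hz ->]; apply: mem_bool_seqs.
have [|_ ->] := uniq_min_size Uq sub; last exact: mem_bool_seqs.
by rewrite size_bool_seqs size_map -NQ.
Qed.

Lemma cols_I_op D T : {subset cols (I_op D T) <= cols T}.
Proof.
rewrite /I_op; case E: [seq _ <- _ | _] => [|a l] //= y.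
by rewrite -E mem_filter => /andP[].
Qed.

Definition dedup_step (acc : seq (seq bool * {fset nat})) (x : seq bool * {fset nat}) :=
  if x.1 \in map fst acc then acc else rcons acc x.

Lemma foldl_dedup_step acc s :
  {subset foldl dedup_step acc s <= acc ++ s} /\
  map fst (foldl dedup_step acc s) =i map fst (acc ++ s).
Proof.
elim: s acc => [|x s IH] acc /=; first by rewrite cats0; split.
have [H1 H2] := IH (dedup_step acc x); split.
  move=> y /H1; rewrite /dedup_step; case: ifP => _; rewrite !mem_cat ?mem_rcons ?inE.
    by case/orP=> ->; rewrite ?orbT.
  by rewrite -!orbA; case/or3P=> ->; rewrite ?orbT.
move=> k; rewrite H2 /dedup_step; case: ifP => Hx; rewrite !map_cat !mem_cat /= ?inE.
  by case: (eqVneq k x.1) => [->|]; rewrite ?Hx ?orbT.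
by rewrite map_rcons mem_rcons inE orbA (orbC (k == _)).
Qed.

Lemma dedup_first_sub s : {subset dedup_first s <= s}.
Proof. exact: (foldl_dedup_step [::] s).1. Qed.

Lemma dedup_first_keys s : map fst (dedup_first s) =i map fst s.
Proof. exact: (foldl_dedup_step [::] s).2. Qed.

Lemma map_row_val Q r : uniq (cols Q) -> size r = size (cols Q) ->
  [seq row_val Q r f | f <- cols Q] = r.
Proof.
move=> U S; apply: (@eq_from_nth _ false); first by rewrite size_map.
by move=> i; rewrite size_map => Hi; rewrite (nth_map 0) // /row_val index_uniq.
Qed.

Lemma row_val_nth T x i : uniq (cols T) -> i < size (cols T) ->
  row_val T x (nth 0 (cols T) i) = nth false x i.
Proof. by move=> U Hi; rewrite /row_val index_uniq. Qed.

Definition relabel (Q : table) : table := J_op witnesses (I_op [::] Q).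

Lemma relabel_cols Q : cols Q != [::] -> cols (relabel Q) = cols Q.
Proof.
move=> H; rewrite /relabel /I_op (eq_filter (a2:=predT)) // filter_predT.
by case: (cols Q) H.
Qed.

Lemma relabel_rows Q : cols Q != [::] ->
  rows (relabel Q) = [seq (r.1, witnesses r.1) | r <- dedup_first
     [seq ([seq row_val Q r.1 f | f <- cols Q], r.2) | r <- rows Q]].
Proof.
move=> H; rewrite /relabel /I_op (eq_filter (a2:=predT)) // filter_predT.
by case: (cols Q) H.
Qed.

Definition witness_table (T : table) (k : nat) : Prop :=
  [/\ uniq (cols T), size (cols T) = k,
      forall r, r \in rows T -> size r.1 = k /\ r.2 = witnesses r.1 &
      forall x, size x = k -> (x, witnesses x) \in rows T].

Lemma witness_table_relabel Q : wf_table Q -> complete Q -> 0 < size (cols Q) ->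
  witness_table (relabel Q) (size (cols Q)).
Proof.
move=> wfQ NQ; rewrite lt0n size_eq0 => Hc.
have [EQ|[_ U _ [Sz Uq _]]] := wfQ; first by rewrite EQ in Hc.
split; rewrite ?relabel_cols //.
- rewrite relabel_rows // => r /mapP [y /dedup_first_sub /mapP [z _ ->] ->].
  by rewrite /= size_map.
- move=> x Sx; rewrite relabel_rows //.
  have : x \in map fst (dedup_first
      [seq ([seq row_val Q r.1 f | f <- cols Q], r.2) | r <- rows Q]).
    rewrite dedup_first_keys -map_comp (@eq_in_map _ _ _ fst (rows Q)).1 ?complete_row_keys //.
    by move: Sz => /allP Sz z /Sz /eqP Hz /=; rewrite map_row_val.
  by case/mapP => y Hy ->; apply: map_f.
Qed.

Lemma witness_table_rows_neq0 T k : witness_table T k -> rows T != [::].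
Proof. by case=> _ _ _ /(_ (nseq k false)); rewrite size_nseq; case: (rows T) => //; apply. Qed.

Lemma mem_subtable T p r :
  (r \in rows (subtable T p)) = (r \in rows T) && row_sat T p r.1.
Proof.
rewrite /subtable andbC -(mem_filter (fun r : seq bool * {fset nat} => row_sat T p r.1)).
by case: [seq _ <- _ | _] => [|y ys] //=; rewrite in_nil.
Qed.

Definition change_test (col : nat -> nat) (t : nat) : dnode :=
  Node (col t) (FCons false (Node (col t.+1) (FCons true (Leaf t.+1) FNil))
               (FCons true (Node (col t.+1) (FCons false (Leaf t.+1) FNil)) FNil)).

Definition ends_test (col : nat -> nat) (k : nat) : dnode :=
  Node (col 0) (FCons false (Node (col k.-1) (FCons false (Leaf 0) FNil))
               (FCons true (Node (col k.-1) (FCons true (Leaf 0) FNil)) FNil)).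

Definition witness_tree (col : nat -> nat) (k : nat) : dtree :=
  ends_test col k :: map (change_test col) (iota 0 k.-1).

Lemma witness_tree_paths col k p : p \in tree_paths (witness_tree col k) ->
  (exists b, p = ([:: (col 0, b); (col k.-1, b)], 0)) \/
  (exists t b, t < k.-1 /\ p = ([:: (col t, b); (col t.+1, ~~ b)], t.+1)).
Proof.
rewrite /tree_paths /witness_tree map_cons -map_comp => /flattenP [vs].
rewrite inE => /orP[/eqP ->|/mapP [t Ht ->]] /=; rewrite !inE => /orP [/eqP->|/eqP->]; eauto.
- by right; exists t, false; rewrite mem_iota in Ht; split=> //; lia.
- by right; exists t, true; rewrite mem_iota in Ht; split=> //; lia.
Qed.

Lemma witness_tree_attrs col k y : 0 < k -> y \in tree_attrs (witness_tree col k) ->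
  exists2 i, i < k & y = col i.
Proof.
move=> Hk; rewrite /tree_attrs /witness_tree map_cons -map_comp => /flattenP [vs].
rewrite inE => /orP[/eqP ->|/mapP [t Ht ->]] /=; rewrite !inE ?in_nil ?orbF.
  by case/or3P => /eqP ->; [exists 0|exists k.-1|exists k.-1] => //; lia.
rewrite mem_iota in Ht.
by case/or3P => /eqP ->; [exists t|exists t.+1|exists t.+1] => //; lia.
Qed.

Fixpoint fchild (f : dforest) (b : bool) : option dnode :=
  match f with
  | FNil => None
  | FCons b' v f' => if b' == b then Some v else fchild f' b
  end.

Lemma fchild_label f b w : fchild f b = Some w -> b \in forest_labels f.
Proof.
elim: f => //= b' v f' IH; case: eqVneq => [->|_]; first by rewrite mem_head.
by move/IH; rewrite inE orbC => ->.
Qed.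

Lemma fchild_paths a f b w q : fchild f b = Some w -> q \in node_paths w ->
  ((a, b) :: q.1, q.2) \in forest_paths a f.
Proof.
elim: f => //= b' v f' IH; rewrite mem_cat; case: eqVneq => [->|_].
  by case=> <- Hq; rewrite map_f.
by move=> H Hq; rewrite (IH H Hq) orbT.
Qed.

Lemma fchild_ok det f b w : fchild f b = Some w -> forest_ok det f -> node_ok det w.
Proof.
elim: f => //= b' v f' IH; case: eqVneq => _; first by case=> <- /andP[].
by move=> H /andP[_]; apply: IH.
Qed.

Lemma forest_pathsP a f p : uniq (forest_labels f) -> p \in forest_paths a f ->
  exists b q w, [/\ fchild f b = Some w, q \in node_paths w & p = ((a, b) :: q.1, q.2)].
Proof.
elim: f => //= b' v f' IH /andP[Nb U]; rewrite mem_cat; case/orP.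
  by case/mapP => q Hq ->; exists b', q, v; rewrite eqxx.
case/(IH U) => b [q [w [H1 H2 H3]]]; exists b, q, w; split=> //.
by case: eqVneq => // E; move: Nb; rewrite E (fchild_label H1).
Qed.

(* [acc] records the answers to the queries made so far. *)
Fixpoint full_tree (s : seq nat) (acc : seq bool) : dnode :=
  match s with
  | [::] => Leaf (first_witness acc)
  | a :: s' => Node a (FCons false (full_tree s' (rcons acc false))
                       (FCons true (full_tree s' (rcons acc true)) FNil))
  end.

Lemma full_treeP s acc p : p \in node_paths (full_tree s acc) ->
  exists2 bits, size bits = size s & p = (zip s bits, first_witness (acc ++ bits)).
Proof.
elim: s acc p => [|a s IH] acc p /=.
  by rewrite inE => /eqP ->; exists [::]; rewrite ?cats0.
rewrite !mem_cat in_nil orbF; case/orP => /mapP [q /IH [bits Hb ->] ->].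
  by exists (false :: bits); rewrite /= ?Hb // cat_rcons.
by exists (true :: bits); rewrite /= ?Hb // cat_rcons.
Qed.

Lemma full_tree_paths s acc bits : size bits = size s ->
  (zip s bits, first_witness (acc ++ bits)) \in node_paths (full_tree s acc).
Proof.
elim: s acc bits => [|a s IH] acc [|b bits] //= => [_|[Hb]]; first by rewrite cats0 inE.
rewrite !mem_cat in_nil orbF -cat_rcons.
have Hq := IH (rcons acc b) bits Hb.
by case: b Hq => Hq; apply/orP; [right|left]; exact: (map_f _ Hq).
Qed.

Lemma full_tree_ok det s acc : node_ok det (full_tree s acc).
Proof. by elim: s acc => //= a s IH acc; rewrite !IH implybT. Qed.

Lemma full_tree_attrs s acc : {subset node_attrs (full_tree s acc) <= s}.
Proof.
elim: s acc => //= a s IH acc y; rewrite inE !mem_cat in_nil orbF.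
by case/or3P => [/eqP ->|/IH H|/IH H]; rewrite inE ?eqxx ?H ?orbT.
Qed.

Lemma row_sat_zip T x bits : uniq (cols T) -> size x = size (cols T) ->
  size bits = size (cols T) -> row_sat T (zip (cols T) bits) x = (x == bits).
Proof.
move=> U Sx Sb; apply/idP/eqP => [/allP H|->].
  apply: (@eq_from_nth _ false); first by rewrite Sx Sb.
  move=> i Hi; rewrite Sx in Hi.
  have : (nth 0 (cols T) i, nth false bits i) \in zip (cols T) bits.
    by rewrite -nth_zip ?Sb //; apply: mem_nth; rewrite size_zip Sb minnn.
  by move/H => /= /eqP; rewrite row_val_nth.
apply/(all_nthP (0, false)) => i; rewrite size_zip Sb minnn => Hi.
by rewrite nth_zip ?Sb //= row_val_nth.
Qed.

Section WitnessTable.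

Variables (T : table) (k : nat).
Hypothesis HT : witness_table T k.

Let col i := nth 0 (cols T) i.

Lemma witness_tree_nondet : 0 < k -> nondet_tree T (witness_tree col k).
Proof.
case: HT => U Sk HR HA Hk; split=> //.
- by rewrite /witness_tree /= all_map; apply/allP.
- by move=> y /(@witness_tree_attrs _ k y Hk) [i Hi ->]; rewrite mem_nth // Sk.
- move=> r Hr; have [Sr _] := HR r Hr; set x := r.1 in Sr *.
  case: (witness_exists x) => [[|t]] /=.
  + move=> /eqP E; exists ([:: (col 0, nth false x 0); (col k.-1, nth false x 0)], 0).
      by rewrite /tree_paths /=; case: (nth false x 0); rewrite !inE eqxx ?orbT.
    rewrite mem_subtable Hr /row_sat /= !row_val_nth ?Sk //; try lia.
    by rewrite Sr in E; rewrite -E !eqxx.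
  + case/andP => Ht Hne; have Htk : t.+1 < k by rewrite -Sr.
    exists ([:: (col t, nth false x t); (col t.+1, ~~ nth false x t)], t.+1).
      rewrite /tree_paths /= !inE; do 2 (apply/orP; right).
      rewrite -map_comp; apply/flattenP; exists (node_paths (change_test col t)).
        by apply/mapP; exists t => //; rewrite mem_iota; lia.
      by case: (nth false x t); rewrite /= !inE eqxx ?orbT.
    rewrite mem_subtable Hr /row_sat /= !row_val_nth ?Sk //; try lia.
    by move: Hne; case: (nth false x t); case: (nth false x t.+1).
- move=> p /witness_tree_paths [[b ->]|[t [b [Ht ->]]]]; right => r;
    rewrite mem_subtable => /andP[Hr]; have [Sr ->] := HR r Hr;
    rewrite /row_sat /= !row_val_nth ?Sk //; try lia; rewrite in_witnesses /= Sr.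
  + by case/and3P => /eqP -> /eqP ->.
  + by case/and3P => /eqP -> /eqP -> _; apply/andP; split; [lia|case: b].
Qed.

Lemma witness_tree_cost psi n : 0 < k -> partially_bounded_measure psi ->
  (forall a, a \in cols T -> psi [:: a] <= n) ->
  tree_cost psi (witness_tree col k) <= n + n.
Proof.
case: HT => U Sk _ _ Hk [_ _ _ Hsub] Hn.
apply/bigmax_leqP_seq => p /witness_tree_paths Hp _.
have Hpair i j : i < k -> j < k -> psi [:: col i; col j] <= n + n.
  move=> Hi Hj; apply: leq_trans (Hsub [:: _] [:: _]) _.
  by apply: leq_add; apply: Hn; rewrite mem_nth // Sk.
by case: Hp => [[b ->]|[t [b [Ht ->]]]] /=; apply: Hpair; lia.
Qed.

Lemma full_tree_det : det_tree T [:: full_tree (cols T) [::]].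
Proof.
case: HT => U Sk HR _; split; last by rewrite /= full_tree_ok.
split=> //=; first by rewrite full_tree_ok.
- by move=> y; rewrite /tree_attrs /= cats0; apply: full_tree_attrs.
- move=> r Hr; have [Sr _] := HR r Hr.
  exists (zip (cols T) r.1, first_witness ([::] ++ r.1)).
    by rewrite /tree_paths /= cats0; apply: full_tree_paths; rewrite Sr.
  by rewrite mem_subtable Hr row_sat_zip ?Sr // eqxx.
- move=> p; rewrite /tree_paths /= cats0 => /full_treeP [bits Hb ->].
  right=> r; rewrite mem_subtable => /andP[Hr]; have [Sr ->] := HR r Hr.
  by rewrite row_sat_zip ?Sr // => /eqP ->; apply: first_witnessP.
Qed.

(* The rows still consistent with the adversary's answers. *)
Definition fixed_ends (l r : nat) (x : seq bool) : Prop :=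
  [/\ size x = k, forall i, i <= l -> nth false x i = false &
      forall i, r <= i < k -> nth false x i = true].

Definition solves (v : dnode) (l r : nat) : Prop :=
  (forall x, fixed_ends l r x -> exists2 p, p \in node_paths v & row_sat T p.1 x) /\
  (forall p x, p \in node_paths v -> fixed_ends l r x -> row_sat T p.1 x ->
     p.2 \in witnesses x).

Lemma step_vec_fixed_ends l r t : l <= t < r -> fixed_ends l r (step_vec k t).
Proof.
move=> /andP[Hl Hr]; split; first by rewrite size_mkseq.
  move=> i Hi; case: (ltnP i k) => Hk; first by rewrite nth_mkseq //; apply/negbTE; lia.
  by rewrite nth_default // size_mkseq.
by move=> i /andP[Hi Hk]; rewrite nth_mkseq //; lia.
Qed.

(* A leaf serves both step_vec l and step_vec l.+1, whose only witnesses differ. *)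
Lemma leaf_solves_gap d l r : solves (Leaf d) l r -> l < r < k -> r - l <= 1.
Proof.
move=> [_ Dec] /andP[Hlr Hrk]; rewrite leqNgt; apply/negP => Hgap.
have Hd t : l <= t < r -> witness (step_vec k t) d.
  move=> Ht; rewrite -in_witnesses.
  by apply: (Dec ([::], d)); [exact: mem_head|exact: step_vec_fixed_ends|].
have := witness_step_vec _ (Hd l _); have := witness_step_vec _ (Hd l.+1 _); lia.
Qed.

(* The adversary answers a query of position [j] so as to keep the larger half of [(l, r)]. *)
Definition answer (j l r : nat) : bool * nat * nat :=
  if j <= l then (false, l, r) else if j < r then
    (if r - j <= j - l then (true, l, j) else (false, j, r)) else (j < k, l, r).

Lemma answer_spec j l r : l < r < k ->
  let: (b, l', r') := answer j l r in
  [/\ l' < r' < k, r - l <= 2 * (r' - l') &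
   forall x, fixed_ends l' r' x -> fixed_ends l r x /\ nth false x j = b].
Proof.
move=> /andP[Hlr Hrk]; rewrite /answer.
case: (leqP j l) => H1.
  by split; [apply/andP|lia|move=> x [S X1 X2]; split=> //; apply: X1].
case: (ltnP j r) => H2.
  case: (leqP (r - j) (j - l)) => H3; (split; [apply/andP; split; lia|lia|]);
    move=> x [S X1 X2].
  - by split; [split=> // i Hi|]; apply: X2; lia.
  - by split; [split=> // i Hi|]; apply: X1; lia.
split; [by apply/andP|lia|move=> x [S X1 X2]; split=> //].
by case: (ltnP j k) => Hj; [apply: X2; lia|rewrite nth_default // S].
Qed.

Lemma solves_child a f l r b l' r' : uniq (forest_labels f) ->
  solves (Node a f) l r -> l' < r' ->
  (forall x, fixed_ends l' r' x -> fixed_ends l r x /\ nth false x (index a (cols T)) = b) ->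
  exists2 w, fchild f b = Some w & solves w l' r'.
Proof.
move=> U [Cov Dec] Hlr' Hsub.
have path_child x : fixed_ends l' r' x -> exists2 q, fchild f b = Some q &
    exists2 p, p \in node_paths q & row_sat T p.1 x.
  move=> Hx; have [Hxa Hxb] := Hsub _ Hx; case: (Cov _ Hxa) => p /= Hp.
  case: (forest_pathsP U Hp) => b1 [q [w [Hw Hq ->]]].
  rewrite /row_sat /= {1}/row_val Hxb => /andP[/eqP Eb Hs]; subst b1.
  by exists w => //; exists q.
have Hl' : l' <= l' < r' by rewrite leqnn.
have [w Hw _] := path_child _ (step_vec_fixed_ends Hl').
exists w => //; split.
  by move=> x /path_child [w']; rewrite Hw => -[<-].
move=> q x Hq Hx Hsq; have [Hxa Hxb] := Hsub _ Hx.
apply: (Dec ((a, b) :: q.1, q.2)) => //=; first exact: fchild_paths Hw Hq.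
by rewrite {1}/row_val Hxb eqxx Hsq.
Qed.

Lemma solves_gap h v l r : node_ok true v ->
  (forall p, p \in node_paths v -> size p.1 <= h) -> solves v l r -> l < r < k ->
  r - l <= 2 ^ h.
Proof.
elim: h v l r => [|h IH] [d|a f] l r Hok Hs Hv Hlr;
  try by apply: leq_trans (leaf_solves_gap Hv Hlr) _; rewrite expn_gt0.
  case/andP: Hok => _ /= U; have Hl : l <= l < r by rewrite leqnn; case/andP: Hlr.
  have [p Hp _] := Hv.1 _ (step_vec_fixed_ends Hl).
  by have [b [q [w [_ _ Ep]]]] := forest_pathsP U Hp; have := Hs p Hp; rewrite Ep.
case/andP: Hok => /andP[_ Fok] /= U.
have := answer_spec (index a (cols T)) Hlr.
case: answer => [[b l'] r'] [/andP[Hl' Hr'] Hgap Hsub].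
have [w Hw Sw] := solves_child U Hv Hl' Hsub.
have Hsw q : q \in node_paths w -> size q.1 <= h.
  by move=> Hq; have := Hs _ (fchild_paths a Hw Hq).
have := IH w l' r' (fchild_ok Hw Fok) Hsw Sw ltac:(lia).
by rewrite expnS; lia.
Qed.

Lemma det_tree_cost_lower psi G : 1 < k -> bounded_measure psi -> det_tree T G ->
  k.-1 <= 2 ^ tree_cost psi G.
Proof.
case: HT => U Sk HR HA Hk [_ Hpsi] [[_ _ _ Cov Dec] [SG OK]].
case: G SG Cov Dec OK => [|v [|]] //= _ Cov Dec /andP[Hv _].
rewrite /tree_paths /= cats0 in Cov Dec.
have Sz p : p \in node_paths v -> size p.1 <= tree_cost psi [:: v].
  move=> Hp; rewrite -(size_map fst); apply: leq_trans (Hpsi _) _.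
  apply: (@leq_bigmax_seq _ _ xpredT (fun p => psi (map fst p.1))) => //.
  by rewrite /tree_paths /= cats0.
have Sv : solves v 0 k.-1.
  split=> [x [Sx _ _]|p x Hp [Sx _ _] Hs].
    by case: (Cov _ (HA x Sx)) => p Hp; rewrite mem_subtable => /andP[_]; exists p.
  have Hr : (x, witnesses x) \in rows (subtable T p.1) by rewrite mem_subtable HA.
  by case: (Dec p Hp) => [E|H]; [rewrite E in Hr|exact: H Hr].
by have := solves_gap Hv Sz Sv ltac:(lia); rewrite subn0.
Qed.

End WitnessTable.

Lemma ex_minimal (P : nat -> Prop) m : P m -> exists2 k, P k & forall k', P k' -> k <= k'.
Proof.
move=> Pm; apply: NNPP => Hno; elim/ltn_ind: m Pm => m IH Pm.
apply: Hno; exists m => // k' Pk'; rewrite leqNgt; apply/negP => Hlt.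
exact: IH k' Hlt Pk'.
Qed.

Lemma optimal_tree_cost psi (P : dtree -> Prop) G : P G ->
  exists2 c, (exists G', P G' /\ tree_cost psi G' = c) /\
             (forall G', P G' -> c <= tree_cost psi G') & c <= tree_cost psi G.
Proof.
move=> PG; pose P' c := exists G', P G' /\ tree_cost psi G' = c.
have [|c Hc Hmin] := @ex_minimal P' (tree_cost psi G); first by exists G.
exists c; last by apply: Hmin; exists G.
by split=> // G' PG'; apply: Hmin; exists G'.
Qed.

Lemma witness_table_complexity psi T k n : witness_table T k -> 1 < k ->
  bounded_measure psi -> (forall a, a \in cols T -> psi [:: a] <= n) ->
  (exists a, psi_a_val psi T a /\ a <= n + n) /\ exists2 d, psi_d_val psi T d & k.-1 <= 2 ^ d.
Proof.
move=> HT Hk Hpsi Hn; have := witness_table_rows_neq0 HT.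
rewrite /psi_a_val /psi_d_val; case: (rows T) => [|r rs] // _; split.
  have [a Ha Hle] := optimal_tree_cost psi (witness_tree_nondet HT (ltnW Hk)).
  by exists a; split=> //; apply: leq_trans Hle (witness_tree_cost HT (ltnW Hk) Hpsi.1 Hn).
have [d [[G [HG <-]] Hmin] _] := optimal_tree_cost psi (full_tree_det HT).
exists (tree_cost psi G); last exact: (det_tree_cost_lower HT Hk Hpsi HG).
by split=> //; exists G.
Qed.

Lemma closed_class_in_cl A T Q : closed_class A -> A T -> in_cl Q T -> A Q.
Proof. by case=> _ [_ Hcl] AT HQ; apply/Hcl; exists T. Qed.

Lemma in_cl_cols Q T : in_cl Q T -> {subset cols Q <= cols T}.
Proof. by case=> D [nu [_ [_ ->]]]; apply: cols_I_op. Qed.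

Lemma relabel_in_cl Q : in_cl (relabel Q) Q.
Proof. by exists [::], witnesses; do !split=> //; apply: witnesses_neq0. Qed.

Lemma m_psi_ge psi T a : a \in cols T -> psi [:: a] <= m_psi psi T.
Proof. by move=> Ha; apply: (@leq_bigmax_seq _ _ xpredT (fun f => psi [:: f])). Qed.

Lemma Z_val_complete T k : 0 < k -> Z_val T k ->
  exists Q, [/\ in_cl Q T, complete Q & size (cols Q) = k].
Proof. by move=> Hk [[Q [HQ NQ kQ _]]|[Hk0 _]]; [exists Q|rewrite Hk0 in Hk]. Qed.

Lemma hard_table_in_class A psi T n k : closed_class A -> bounded_measure psi ->
  A T -> m_psi psi T <= n -> Z_val T k -> 1 < k ->
  exists T', [/\ A T', exists a, psi_a_val psi T' a /\ a <= n + n &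
                       exists2 d, psi_d_val psi T' d & k.-1 <= 2 ^ d].
Proof.
move=> clA Hpsi AT Hm HZ Hk.
have [Q [HQ NQ kQ]] := Z_val_complete (ltnW Hk) HZ.
have AQ := closed_class_in_cl clA AT HQ.
have HT : witness_table (relabel Q) k.
  by rewrite -kQ; apply: witness_table_relabel (clA.1 Q AQ) NQ _; rewrite kQ ltnW.
have [Ha Hd] : (exists a, psi_a_val psi (relabel Q) a /\ a <= n + n) /\
               exists2 d, psi_d_val psi (relabel Q) d & k.-1 <= 2 ^ d.
  apply: witness_table_complexity HT Hk Hpsi _ => a /cols_I_op /(in_cl_cols HQ) Ha.
  exact: leq_trans (m_psi_ge psi Ha) Hm.
by exists (relabel Q); split=> //; apply: closed_class_in_cl clA AQ (relabel_in_cl Q).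
Qed.

Unset Implicit Arguments.

Theorem lemma11 (A : table -> Prop) (psi : seq nat -> nat) :
  closed_class A -> nontrivial A -> bounded_measure psi ->
  (exists n, Z_undefined psi A n) ->
  exists n, H_undefined psi A n.
Proof.
move=> clA _ Hpsi [n Zn]; exists (n + n) => -[s Hs].
set M := \max_(d <- s) d.
apply: Zn; exists (iota 0 (2 ^ M).+2) => k [T [AT Hm HZ]].
rewrite mem_iota /= ltnNge; apply/negP => Hk.
have [|T' [AT' Ha [d Hd Hkd]]] := hard_table_in_class clA Hpsi AT Hm HZ; first lia.
have HdM : d <= M by apply: (@leq_bigmax_seq _ _ xpredT id) => //; apply: Hs; exists T'; split.
have := leq_pexp2l (isT : 0 < 2) HdM; lia.
Qed.
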